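(* Let $k$ be a field of characteristic $\neq 2$, let $\mathfrak g_\boxtimes$ be the Tetrahedron algebra over $k$, and let $\mathfrak f$ be the Lie algebra over $k$ generated by $z_0,z_1,z_2$ subject to the relations, for every $i\in\{0,1,2\}$ with indices modulo $3$: $[[z_i,z_{i+1}],z_{i+2}]=0$; $[z_i,[z_i,z_{i+1}]]=z_{i+1}+[z_{i+2},z_i]$; $\bigl[[z_{i+1},[z_{i+1},[z_{i+1},z_i]]],[z_{i+1},z_i]\bigr]=0$. Then there is a Lie algebra isomorphism $\Phi:\mathfrak g_\boxtimes\to\mathfrak f$ such that $\Phi(X_{01})=2(z_2-[z_1,z_2])$, $\Phi(X_{23})=2(z_2+[z_1,z_2])$, $\Phi(X_{02})=2(z_0-[z_2,z_0])$, $\Phi(X_{31})=2(z_0+[z_2,z_0])$, $\Phi(X_{03})=2(z_1-[z_0,z_1])$, $\Phi(X_{12})=2(z_1+[z_0,z_1])$.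
   Context: The Tetrahedron algebra $\mathfrak g_\boxtimes$ is the Lie algebra over $k$ with generators $X_{ij}$ ($i,j\in\{0,1,2,3\}$, $i\neq j$) and relations $X_{ij}+X_{ji}=0$ for $i\neq j$; $[X_{ij},X_{jk}]=2(X_{ij}+X_{jk})$ for mutually distinct $i,j,k$; $[X_{hi},[X_{hi},[X_{hi},X_{jk}]]]=4[X_{hi},X_{jk}]$ for mutually distinct $h,i,j,k$. *)

From HB Require Import structures.
From mathcomp Require Import all_boot all_order all_algebra.
Set Implicit Arguments. Unset Strict Implicit. Unset Printing Implicit Defensive.
Import Order.TTheory GRing.Theory Num.Theory.
Local Open Scope ring_scope.

Record lieAlgebra (K : fieldType) := LieAlgebra {
  lie_sort :> lmodType K;
  lie_br : lie_sort -> lie_sort -> lie_sort;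
  lie_brDl : forall (a : K) (x y z : lie_sort),
      lie_br (a *: x + y) z = a *: lie_br x z + lie_br y z;
  lie_brDr : forall (a : K) (x y z : lie_sort),
      lie_br x (a *: y + z) = a *: lie_br x y + lie_br x z;
  lie_brxx : forall x : lie_sort, lie_br x x = 0;
  lie_jacobi : forall x y z : lie_sort,
      lie_br x (lie_br y z) + lie_br y (lie_br z x) + lie_br z (lie_br x y) = 0
}.

Notation "[[ x , y ]]" := (lie_br x y) (format "[[ x ,  y ]]").

Definition lie_hom (K : fieldType) (L M : lieAlgebra K) (f : L -> M) : Prop :=
  (forall (a : K) (x y : L), f (a *: x + y) = a *: f x + f y) /\
  (forall x y : L, f [[x, y]] = [[f x, f y]]).

Definition lie_iso (K : fieldType) (L M : lieAlgebra K) (f : L -> M) : Prop :=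
  lie_hom f /\ bijective f.

Definition presented_by (K : fieldType) (I : Type)
    (rel : forall M : lieAlgebra K, (I -> M) -> Prop)
    (L : lieAlgebra K) (gen : I -> L) : Prop :=
  rel L gen /\
  (forall (M : lieAlgebra K) (y : I -> M), rel M y ->
     exists f : L -> M, lie_hom f /\ forall i, f (gen i) = y i) /\
  (forall (M : lieAlgebra K) (f g : L -> M), lie_hom f -> lie_hom g ->
     (forall i, f (gen i) = g (gen i)) -> forall x, f x = g x).

Definition tet_index := {p : 'I_4 * 'I_4 | p.1 != p.2}.

Definition tet_rel (K : fieldType) (M : lieAlgebra K) (Y : tet_index -> M) : Prop :=
  (forall (i j : 'I_4) (hij : i != j) (hji : j != i),
      Y (exist _ (i, j) hij) + Y (exist _ (j, i) hji) = 0) /\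
  (forall (i j k : 'I_4) (hij : i != j) (hjk : j != k), i != k ->
      [[Y (exist _ (i, j) hij), Y (exist _ (j, k) hjk)]]
        = 2%:R *: (Y (exist _ (i, j) hij) + Y (exist _ (j, k) hjk))) /\
  (forall (h i j k : 'I_4) (hhi : h != i) (hjk : j != k),
      h != j -> h != k -> i != j -> i != k ->
      let A := Y (exist _ (h, i) hhi) in
      [[A, [[A, [[A, Y (exist _ (j, k) hjk)]]]]]] = 4%:R *: [[A, Y (exist _ (j, k) hjk)]]).

Definition is_tetrahedron_algebra (K : fieldType) (L : lieAlgebra K)
    (X : tet_index -> L) : Prop :=
  presented_by (@tet_rel K) X.

Definition f_rel (K : fieldType) (M : lieAlgebra K) (z : 'I_3 -> M) : Prop :=
  forall i : 'I_3,
    let i1 := ordS i in let i2 := ordS (ordS i) in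
    [[ [[z i, z i1]], z i2 ]] = 0 /\
    [[ z i, [[z i, z i1]] ]] = z i1 + [[z i2, z i]] /\
    [[ [[z i1, [[z i1, [[z i1, z i]] ]] ]], [[z i1, z i]] ]] = 0.

Definition is_f_algebra (K : fieldType) (L : lieAlgebra K) (z : 'I_3 -> L) : Prop :=
  presented_by (@f_rel K) z.

Definition tetX (K : fieldType) (L : lieAlgebra K) (X : tet_index -> L)
  (i j : 'I_4) (h : i != j) : L := X (exist _ (i, j) h).

From HB Require Import structures.
From mathcomp Require Import all_boot all_order all_algebra.
From mathcomp Require Import ring.
Set Implicit Arguments. Unset Strict Implicit. Unset Printing Implicit Defensive.
Import GRing.Theory.
Local Open Scope ring_scope.

(* Both algebras are given by presentations, so it suffices to send the
   generators of each to elements of the other satisfying its relations and to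
   check that the two induced homomorphisms are mutually inverse on generators.
   In f, write (a, b, c) = (z0, z1, z2).  The relations yield the table
   [[a, b], [b, c]] = b (and its cyclic shifts), and from it the identities
   saying that c - [b, c] and c + [b, c] satisfy the Dolan-Grady relation
   [x, [x, [x, y]]] = [x, y]; hence the six elements 2(c -+ [b, c]),
   2(a -+ [c, a]), 2(b -+ [a, b]) satisfy the tetrahedron relations.
   Conversely, the three perfect matchings of {0, 1, 2, 3} give the elements
   X02 + X31, X03 + X12, X01 + X23 of the tetrahedron algebra, with for instance
   [X02 + X31, X03 + X12] = 4 (X12 - X03); one quarter of them (here char K <> 2
   is used) satisfy the relations of f. *)

(** * Linear identities in Z-modules *)

Inductive zterm :=
  | ZAtom of nat | ZZero | ZAdd of zterm & zterm | ZOpp of zterm | ZMuln of zterm & nat.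

Fixpoint zterm_eval (V : zmodType) (env : seq V) (t : zterm) : V :=
  match t with
  | ZAtom n => nth 0 env n
  | ZZero => 0
  | ZAdd t1 t2 => zterm_eval env t1 + zterm_eval env t2
  | ZOpp t => - zterm_eval env t
  | ZMuln t k => zterm_eval env t *+ k
  end.

(* Normal form of a term: the sequence of integer coefficients of its atoms. *)
Fixpoint zcoef_add (s1 s2 : seq int) : seq int :=
  match s1, s2 with
  | [::], _ => s2
  | _, [::] => s1
  | x1 :: s1', x2 :: s2' => (x1 + x2) :: zcoef_add s1' s2'
  end.

Fixpoint zcoefs (t : zterm) : seq int :=
  match t with
  | ZAtom n => ncons n 0 [:: 1]
  | ZZero => [::]
  | ZAdd t1 t2 => zcoef_add (zcoefs t1) (zcoefs t2)
  | ZOpp t => map -%R (zcoefs t)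
  | ZMuln t k => map ( *%R^~ k%:Z) (zcoefs t)
  end.

Fixpoint zcoef_eval (V : zmodType) (env : seq V) (s : seq int) : V :=
  match s, env with
  | x :: s', v :: env' => v *~ x + zcoef_eval env' s'
  | _, _ => 0
  end.

Section ZcoefEval.
Variables (V : zmodType) (env : seq V).

Lemma zcoef_evalD s1 s2 :
  zcoef_eval env (zcoef_add s1 s2) = zcoef_eval env s1 + zcoef_eval env s2.
Proof.
elim: s1 s2 env => [|x1 s1 IH] [|x2 s2] [|v env'] //=; rewrite ?addr0 ?add0r //.
by rewrite IH mulrzDr addrACA.
Qed.

Lemma zcoef_evalN s : zcoef_eval env (map -%R s) = - zcoef_eval env s.
Proof.
elim: s env => [|x s IH] [|v env'] //=; rewrite ?oppr0 //.
by rewrite IH mulrNz opprD.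
Qed.

Lemma zcoef_evalMn s k : zcoef_eval env (map ( *%R^~ k%:Z) s) = zcoef_eval env s *+ k.
Proof.
elim: s env => [|x s IH] [|v env'] //=; rewrite ?mul0rn //.
by rewrite IH mulrnDl mulrzA.
Qed.

Lemma zcoef_eval_atom n : zcoef_eval env (ncons n 0 [:: 1]) = nth 0 env n.
Proof.
elim: n env => [|n IH] [|v env'] //=; last by rewrite mulr0z add0r.
by case: env' => [|? ?] /=; rewrite ?addr0.
Qed.

Lemma zcoefsE t : zterm_eval env t = zcoef_eval env (zcoefs t).
Proof.
elim: t => [n||t1 IH1 t2 IH2|t IH|t IH k] /=.
- by rewrite zcoef_eval_atom.
- by case: env.
- by rewrite zcoef_evalD IH1 IH2.
- by rewrite zcoef_evalN IH.
- by rewrite zcoef_evalMn IH.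
Qed.

Lemma zcoef_eval0 s : all (eq_op^~ 0) s -> zcoef_eval env s = 0.
Proof.
elim: s env => [|x s IH] [|v env'] //= /andP[/eqP -> s0].
by rewrite mulr0z add0r IH.
Qed.

Lemma zterm_eval_eq t1 t2 :
  all (eq_op^~ 0) (zcoefs (ZAdd t1 (ZOpp t2))) -> zterm_eval env t1 = zterm_eval env t2.
Proof.
by move=> /zcoef_eval0 /eqP; rewrite -zcoefsE subr_eq0 => /eqP.
Qed.

End ZcoefEval.

Ltac zatom_index x env :=
  lazymatch env with
  | x :: _ => constr:(0%N)
  | _ :: ?env' => let n := zatom_index x env' in constr:(S n)
  end.

Ltac zenv_size env :=
  lazymatch env with
  | nil => constr:(0%N)
  | _ :: ?env' => let n := zenv_size env' in constr:(S n)
  end.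

Ltac zenv_rcons env x :=
  lazymatch env with
  | nil => constr:(x :: nil)
  | ?y :: ?env' => let env'' := zenv_rcons env' x in constr:(y :: env'')
  end.

Ltac zreify t env :=
  lazymatch t with
  | ?t1 + ?t2 =>
    lazymatch zreify t1 env with (?r1, ?env1) =>
    lazymatch zreify t2 env1 with (?r2, ?env2) => constr:((ZAdd r1 r2, env2)) end end
  | - ?t1 =>
    lazymatch zreify t1 env with (?r1, ?env1) => constr:((ZOpp r1, env1)) end
  | ?t1 *+ ?k =>
    lazymatch zreify t1 env with (?r1, ?env1) => constr:((ZMuln r1 k, env1)) end
  | GRing.zero => constr:((ZZero, env))
  | _ =>
    match constr:(true) with
    | _ => let n := zatom_index t env in constr:((ZAtom n, env))
    | _ => let n := zenv_size env in let env' := zenv_rcons env t in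
           constr:((ZAtom n, env'))
    end
  end.

Ltac zmodsolve :=
  lazymatch goal with
  | |- @eq ?V ?l ?r =>
    lazymatch zreify l (@nil V) with (?tl, ?env1) =>
    lazymatch zreify r env1 with (?tr, ?env) =>
      change (zterm_eval env tl = zterm_eval env tr);
      apply: zterm_eval_eq; vm_compute; reflexivity
    end end
  end.

Lemma eq_modulo (V : zmodType) (e l r : V) : e = 0 -> l = r + e -> l = r.
Proof. by move=> -> ->; rewrite addr0. Qed.

Lemma eq_moduloN (V : zmodType) (e l r : V) : e = 0 -> l = r - e -> l = r.
Proof. by move=> -> ->; rewrite subr0. Qed.

Ltac zmodsolve_using J :=
  first [ apply: (eq_modulo J); zmodsolve
        | apply: (eq_moduloN J); zmodsolve ].

Section LieArith.
Variables (K : fieldType) (L : lieAlgebra K).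
Implicit Types (x y z : L) (k : K).

Lemma brDl x y z : [[x + y, z]] = [[x, z]] + [[y, z]].
Proof. by rewrite -[x in LHS]scale1r lie_brDl scale1r. Qed.

Lemma brDr x y z : [[z, x + y]] = [[z, x]] + [[z, y]].
Proof. by rewrite -[x in LHS]scale1r lie_brDr scale1r. Qed.

Lemma br0l z : [[0, z]] = 0.
Proof. by apply: (addIr [[0, z]]); rewrite -brDl !add0r. Qed.

Lemma br0r z : [[z, 0]] = 0.
Proof. by apply: (addIr [[z, 0]]); rewrite -brDr !add0r. Qed.

Lemma brZl k x z : [[k *: x, z]] = k *: [[x, z]].
Proof. by rewrite -[k *: x]addr0 lie_brDl br0l addr0. Qed.

Lemma brZr k x z : [[z, k *: x]] = k *: [[z, x]].
Proof. by rewrite -[k *: x]addr0 lie_brDr br0r addr0. Qed.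

Lemma brNl x z : [[- x, z]] = - [[x, z]].
Proof. by rewrite -scaleN1r brZl scaleN1r. Qed.

Lemma brNr x z : [[z, - x]] = - [[z, x]].
Proof. by rewrite -scaleN1r brZr scaleN1r. Qed.

Lemma brMnl x z n : [[x *+ n, z]] = [[x, z]] *+ n.
Proof. by rewrite -!scaler_nat brZl. Qed.

Lemma brMnr x z n : [[z, x *+ n]] = [[z, x]] *+ n.
Proof. by rewrite -!scaler_nat brZr. Qed.

Lemma br_skew x y : [[y, x]] = - [[x, y]].
Proof.
apply/eqP; rewrite -addr_eq0 addrC; apply/eqP.
by have := lie_brxx (x + y); rewrite brDl !brDr !lie_brxx add0r addr0.
Qed.

Lemma br_skew_eq x y z : [[x, y]] = z -> [[y, x]] = - z.
Proof. by move=> <-; apply: br_skew. Qed.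

End LieArith.

Ltac br_expand :=
  repeat progress rewrite ?brMnl ?brMnr ?brZl ?brZr ?brNl ?brNr ?brDl ?brDr
                          ?br0l ?br0r ?lie_brxx.

Ltac br_expand_in H :=
  repeat progress rewrite ?brMnl ?brMnr ?brZl ?brZr ?brNl ?brNr ?brDl ?brDr
                          ?br0l ?br0r ?lie_brxx in H.

Section LieHom.
Variables (K : fieldType) (L M : lieAlgebra K) (f : L -> M).
Hypothesis hf : lie_hom f.

Lemma lie_homD x y : f (x + y) = f x + f y.
Proof. by have := hf.1 1 x y; rewrite !scale1r. Qed.

Lemma lie_hom0 : f 0 = 0.
Proof. by apply: (addIr (f 0)); rewrite -lie_homD !add0r. Qed.

Lemma lie_homZ k x : f (k *: x) = k *: f x.
Proof. by have := hf.1 k x 0; rewrite !addr0 lie_hom0 addr0. Qed.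

Lemma lie_homN x : f (- x) = - f x.
Proof. by rewrite -scaleN1r lie_homZ scaleN1r. Qed.

Lemma lie_homB x y : f (x - y) = f x - f y.
Proof. by rewrite lie_homD lie_homN. Qed.

Lemma lie_hom_br x y : f [[x, y]] = [[f x, f y]].
Proof. exact: hf.2. Qed.

End LieHom.

Lemma lie_hom_id K (L : lieAlgebra K) : lie_hom (@id L).
Proof. by []. Qed.

Lemma lie_hom_comp K (L M N : lieAlgebra K) (f : L -> M) (g : M -> N) :
  lie_hom f -> lie_hom g -> lie_hom (g \o f).
Proof.
move=> hf hg; split=> [a x y|x y] /=; first by rewrite hf.1 hg.1.
by rewrite !lie_hom_br.
Qed.

Lemma presented_by_iso K (I J : Type)
    (relI : forall M : lieAlgebra K, (I -> M) -> Prop)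
    (relJ : forall M : lieAlgebra K, (J -> M) -> Prop)
    (L : lieAlgebra K) (x : I -> L) (M : lieAlgebra K) (y : J -> M)
    (f : L -> M) (g : M -> L) :
  presented_by relI x -> presented_by relJ y -> lie_hom f -> lie_hom g ->
  (forall i, g (f (x i)) = x i) -> (forall j, f (g (y j)) = y j) -> lie_iso f.
Proof.
move=> [_ [_ uniqL] ] [_ [_ uniqM] ] hf hg gfx fgy; split=> //; exists g.
- exact: uniqL (lie_hom_comp hf hg) (@lie_hom_id _ L) gfx.
- exact: uniqM (lie_hom_comp hg hf) (@lie_hom_id _ M) fgy.
Qed.

Definition f_triple K (L : lieAlgebra K) (a b c : L) : Prop :=
  [/\ [[ [[a, b]], c ]] = 0, [[a, [[a, b]]]] = b + [[c, a]]
    & [[ [[b, [[b, [[b, a]]]]]], [[b, a]] ]] = 0].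

Lemma f_relE K (L : lieAlgebra K) (z : 'I_3 -> L) :
  let z0 := z (inord 0) in let z1 := z (inord 1) in let z2 := z (inord 2) in
  f_rel z <-> [/\ f_triple z0 z1 z2, f_triple z1 z2 z0 & f_triple z2 z0 z1].
Proof.
have S0 : ordS (inord 0 : 'I_3) = inord 1 by apply: val_inj; rewrite /= !inordK.
have S1 : ordS (inord 1 : 'I_3) = inord 2 by apply: val_inj; rewrite /= !inordK.
have S2 : ordS (inord 2 : 'I_3) = inord 0 by apply: val_inj; rewrite /= !inordK.
move=> z0 z1 z2; split=> [fz | [t0 t1 t2] i].
  have := fz (inord 0); have := fz (inord 1); have := fz (inord 2).
  rewrite /= !(S0, S1, S2); move=> -[? [? ?] ] [? [? ?] ] [? [? ?] ].
  by split; split.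
rewrite -(inord_val i); case: i => [ [|[|[|n] ] ] //= _].
- by rewrite S0 S1; case: t0.
- by rewrite S1 S2; case: t1.
- by rewrite S2 S0; case: t2.
Qed.

Definition dg_rel K (L : lieAlgebra K) (x y : L) : Prop :=
  [[x, [[x, [[x, y]]]]]] = 4%:R *: [[x, y]].

Definition tet_rels K (L : lieAlgebra K) (e : 'I_4 -> 'I_4 -> L) : Prop :=
  [/\ forall i j, i != j -> e j i = - e i j,
      forall i j k, i != j -> j != k -> i != k ->
        [[e i j, e j k]] = 2%:R *: (e i j + e j k)
    & forall h i j k, h != i -> j != k -> h != j -> h != k -> i != j -> i != k ->
        dg_rel (e h i) (e j k)].

Lemma tet_rel_fun K (L : lieAlgebra K) (e : 'I_4 -> 'I_4 -> L) :
  tet_rels e -> tet_rel (fun t : tet_index => e (sval t).1 (sval t).2).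
Proof.
move=> [anti adj dg]; split; last split=> /=.
- by move=> i j hij hji /=; rewrite (anti i j) // addrN.
- by move=> i j k hij hjk; apply: adj.
- by move=> h i j k hhi hjk hhj hhk hij hik; apply: dg.
Qed.

(* [0] on the diagonal, where [X] is undefined. *)
Definition tet_ext K (L : lieAlgebra K) (X : tet_index -> L) (i j : 'I_4) : L :=
  if insub (i, j) is Some t then X t else 0.

Lemma tet_extE K (L : lieAlgebra K) (X : tet_index -> L) (i j : 'I_4) (h : i != j) :
  X (exist _ (i, j) h) = tet_ext X i j.
Proof. by rewrite /tet_ext insubT /=; congr X; apply: val_inj. Qed.

Lemma tet_rels_ext K (L : lieAlgebra K) (X : tet_index -> L) :
  tet_rel X -> tet_rels (tet_ext X).
Proof.
move=> [anti [adj dg] ]; split.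
- move=> i j hij; have hji : j != i by rewrite eq_sym.
  by apply/eqP; rewrite -addr_eq0 addrC -!(tet_extE X) anti.
- by move=> i j k hij hjk hik; rewrite -!(tet_extE X hij) -!(tet_extE X hjk) adj.
- move=> h i j k hhi hjk hhj hhk hij hik.
  by rewrite /dg_rel -(tet_extE X hhi) -(tet_extE X hjk); apply: dg.
Qed.

(** * The tetrahedron relations inside [f] *)

Section DolanGrady.
Variables (K : fieldType) (L : lieAlgebra K).

Definition dg_unit (x y : L) : Prop := [[x, [[x, [[x, y]]]]]] = [[x, y]].

Lemma dg_rel_scale2 (x y : L) : dg_unit x y -> dg_rel (2%:R *: x) (2%:R *: y).
Proof. by rewrite /dg_unit /dg_rel !brZl !brZr => ->; rewrite !scalerA -!natrM. Qed.

Lemma dg_relNl (x y : L) : dg_rel x y -> dg_rel (- x) y.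
Proof. by rewrite /dg_rel !brNl !brNr !opprK scalerN => ->. Qed.

Lemma dg_relNr (x y : L) : dg_rel x y -> dg_rel x (- y).
Proof. by rewrite /dg_rel !brNr scalerN => ->. Qed.

Lemma dg_unit_pm (c v : L) :
  [[v, [[c, [[c, v]]]]]] = 0 -> [[c, [[v, [[c, v]]]]]] = 0 ->
  [[c, [[c, [[c, v]]]]]] = [[c, v]] - [[v, [[v, [[c, v]]]]]] ->
  dg_unit (c - v) (c + v) /\ dg_unit (c + v) (c - v).
Proof.
move=> d1 d2 d3; have vc := br_skew c v.
by split; rewrite /dg_unit; do 3 (br_expand; rewrite ?vc ?d1 ?d2 ?d3); zmodsolve.
Qed.

End DolanGrady.

Section FTriple.
Variables (K : fieldType) (L : lieAlgebra K).
Implicit Types a b c : L.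

Lemma f_br_table a b c : f_triple a b c -> f_triple b c a -> f_triple c a b ->
  [[ [[a, b]], [[b, c]] ]] = b.
Proof.
move=> [_ Ra _] [Rb1 Rb2 _] _.
have J := lie_jacobi a b [[b, c]].
rewrite Rb2 Rb1 in J; br_expand_in J; rewrite Ra (br_skew c a) in J.
by rewrite (br_skew [[b, c]]); zmodsolve_using J.
Qed.

Lemma f_dg_unit a b c : f_triple a b c -> f_triple b c a -> f_triple c a b ->
  dg_unit (c - [[b, c]]) (c + [[b, c]]) /\ dg_unit (c + [[b, c]]) (c - [[b, c]]).
Proof.
move=> H0 H1 H2; have vs := f_br_table H1 H2 H0.
move: H0 H1 H2 => [_ Ra _] [Rb1 _ Rb3] [Rc1 Rc2 _].
set v := [[b, c]] in vs Rb1 Rb3 Rc1 Rc2 *; set s := [[c, a]] in vs Ra Rc1 Rc2 *.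
have s_cv : [[s, [[c, v]]]] = 0.
  have J := lie_jacobi v c s.
  rewrite Rc2 (br_skew v s) vs (br_skew c v) in J; br_expand_in J; rewrite Rb1 in J.
  by zmodsolve_using J.
have a_cv : [[a, [[c, v]]]] = c.
  have J := lie_jacobi a c v.
  rewrite Rb1 (br_skew c a) in J; br_expand_in J; rewrite vs in J.
  by zmodsolve_using J.
have v_ccv : [[v, [[c, [[c, v]]]]]] = 0.
  rewrite (br_skew b c) in Rb3; br_expand_in Rb3; rewrite -/v in Rb3.
  by rewrite (br_skew [[c, [[c, v]]]] v); zmodsolve_using Rb3.
have c_vcv : [[c, [[v, [[c, v]]]]]] = 0.
  have J := lie_jacobi c v [[c, v]].
  rewrite (br_skew c [[c, v]]) in J; br_expand_in J; rewrite v_ccv in J.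
  by zmodsolve_using J.
have s_ccv : [[s, [[c, [[c, v]]]]]] = - c - [[v, [[c, v]]]].
  have J := lie_jacobi s c [[c, v]].
  rewrite (br_skew s [[c, v]]) s_cv (br_skew c s) Rc2 in J; br_expand_in J.
  rewrite (br_skew a [[c, v]]) a_cv (br_skew v [[c, v]]) in J.
  by zmodsolve_using J.
apply: dg_unit_pm => //.
have J := lie_jacobi v s [[c, [[c, v]]]].
rewrite s_ccv (br_skew v [[c, [[c, v]]]]) v_ccv vs (br_skew c [[c, [[c, v]]]]) in J.
br_expand_in J; rewrite (br_skew c v) in J.
by zmodsolve_using J.
Qed.

End FTriple.

Definition tet_image K (L : lieAlgebra K) (a b c : L) (i j : 'I_4) : L :=
  match nat_of_ord i, nat_of_ord j with
  | 0, 1 => 2%:R *: (c - [[b, c]])  | 1, 0 => - (2%:R *: (c - [[b, c]]))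
  | 2, 3 => 2%:R *: (c + [[b, c]])  | 3, 2 => - (2%:R *: (c + [[b, c]]))
  | 0, 2 => 2%:R *: (a - [[c, a]])  | 2, 0 => - (2%:R *: (a - [[c, a]]))
  | 3, 1 => 2%:R *: (a + [[c, a]])  | 1, 3 => - (2%:R *: (a + [[c, a]]))
  | 0, 3 => 2%:R *: (b - [[a, b]])  | 3, 0 => - (2%:R *: (b - [[a, b]]))
  | 1, 2 => 2%:R *: (b + [[a, b]])  | 2, 1 => - (2%:R *: (b + [[a, b]]))
  | _, _ => 0
  end.

Lemma tet_image_skew K (L : lieAlgebra K) (a b c : L) (i j : 'I_4) :
  i != j -> tet_image a b c j i = - tet_image a b c i j.
Proof.
case: i j => [ [|[|[|[|i] ] ] ] hi] [ [|[|[|[|j] ] ] ] hj] //= _; by rewrite /tet_image /= ?opprK.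
Qed.

Lemma tet_image_rels K (L : lieAlgebra K) (a b c : L) :
  f_triple a b c -> f_triple b c a -> f_triple c a b -> tet_rels (tet_image a b c).
Proof.
move=> H0 H1 H2.
have [dgc1 dgc2] := f_dg_unit H0 H1 H2.
have [dga1 dga2] := f_dg_unit H1 H2 H0.
have [dgb1 dgb2] := f_dg_unit H2 H0 H1.
have Ta := f_br_table H2 H0 H1; have Tb := f_br_table H0 H1 H2.
have Tc := f_br_table H1 H2 H0.
move: H0 H1 H2 => [Ra1 Ra2 _] [Rb1 Rb2 _] [Rc1 Rc2 _].
have skew := (br_skew a b, br_skew b c, br_skew c a,
              br_skew a [[c, a]], br_skew b [[a, b]], br_skew c [[b, c]]).
have rels := (Ra1, Ra2, Rb1, Rb2, Rc1, Rc2, Ta, Tb, Tc).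
have rels_rev := (br_skew_eq Ra1, br_skew_eq Ra2, br_skew_eq Rb1, br_skew_eq Rb2,
  br_skew_eq Rc1, br_skew_eq Rc2, br_skew_eq Ta, br_skew_eq Tb, br_skew_eq Tc).
split.
- exact: tet_image_skew.
- move=> [ [|[|[|[|i] ] ] ] hi] [ [|[|[|[|j] ] ] ] hj] [ [|[|[|[|k] ] ] ] hk] //= _ _ _;
  rewrite /tet_image /=; do 3 (br_expand; rewrite ?skew ?rels ?rels_rev);
  rewrite ?scaler_nat; zmodsolve.
- move=> [ [|[|[|[|h] ] ] ] hh] [ [|[|[|[|i] ] ] ] hi] [ [|[|[|[|j] ] ] ] hj]
         [ [|[|[|[|k] ] ] ] hk] //= _ _ _ _ _ _; rewrite /tet_image /=;
  by repeat (apply: dg_relNl || apply: dg_relNr); apply: dg_rel_scale2.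
Qed.

(** * The relations of [f] inside the tetrahedron algebra *)

Section TetrahedronMatchings.
Variables (K : fieldType) (L : lieAlgebra K) (e : 'I_4 -> 'I_4 -> L).
Hypothesis he : tet_rels e.

Lemma tet_skew i j : i != j -> e j i = - e i j.
Proof. by case: he => anti _ _; apply: anti. Qed.

Lemma tet_br_adj i j k : i != j -> j != k -> i != k ->
  [[e i j, e j k]] = 2%:R *: (e i j + e j k).
Proof. by case: he => _ adj _; apply: adj. Qed.

Lemma tet_br_src i j k : i != j -> j != k -> i != k ->
  [[e i j, e i k]] = 2%:R *: (e i j - e i k).
Proof.
move=> hij hjk hik; have hji : j != i by rewrite eq_sym.
rewrite -[LHS]opprK -brNl -tet_skew // tet_br_adj // tet_skew //.
by rewrite !scaler_nat; zmodsolve.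
Qed.

Lemma tet_br_tgt i j k : i != j -> j != k -> i != k ->
  [[e i j, e k j]] = 2%:R *: (e k j - e i j).
Proof.
by move=> hij hjk hik; rewrite (tet_skew hjk) brNr tet_br_adj // !scaler_nat; zmodsolve.
Qed.

Lemma tet_br_cyc i j k : i != j -> j != k -> i != k ->
  [[e i j, e k i]] = - (2%:R *: (e k i + e i j)).
Proof.
move=> hij hjk hik; have hki : k != i by rewrite eq_sym.
by rewrite br_skew tet_br_adj // eq_sym.
Qed.

Lemma tet_dg h i j k : h != i -> j != k -> h != j -> h != k -> i != j -> i != k ->
  [[e h i, [[e h i, [[e h i, e j k]]]]]] = [[e h i, e j k]] *+ 4.
Proof. by case: he => _ _ dg *; rewrite dg // scaler_nat. Qed.

Variables p0 p1 p2 p3 : 'I_4.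
Hypothesis hp : uniq [:: p0; p1; p2; p3].

Let h01 : p0 != p1. Proof. by apply: contraTneq hp => ->; rewrite /= !inE eqxx /= ?orbT ?andbF. Qed.
Let h02 : p0 != p2. Proof. by apply: contraTneq hp => ->; rewrite /= !inE eqxx /= ?orbT ?andbF. Qed.
Let h03 : p0 != p3. Proof. by apply: contraTneq hp => ->; rewrite /= !inE eqxx /= ?orbT ?andbF. Qed.
Let h12 : p1 != p2. Proof. by apply: contraTneq hp => ->; rewrite /= !inE eqxx /= ?orbT ?andbF. Qed.
Let h13 : p1 != p3. Proof. by apply: contraTneq hp => ->; rewrite /= !inE eqxx /= ?orbT ?andbF. Qed.
Let h23 : p2 != p3. Proof. by apply: contraTneq hp => ->; rewrite /= !inE eqxx /= ?orbT ?andbF. Qed.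
Let h10 : p1 != p0. Proof. by rewrite eq_sym. Qed.
Let h20 : p2 != p0. Proof. by rewrite eq_sym. Qed.
Let h30 : p3 != p0. Proof. by rewrite eq_sym. Qed.
Let h21 : p2 != p1. Proof. by rewrite eq_sym. Qed.
Let h31 : p3 != p1. Proof. by rewrite eq_sym. Qed.
Let h32 : p3 != p2. Proof. by rewrite eq_sym. Qed.
#[local] Hint Resolve h01 h02 h03 h12 h13 h23 h10 h20 h30 h21 h31 h32 : core.

Local Notation A := (e p0 p1 + e p2 p3).
Local Notation B := (e p0 p2 + e p3 p1).
Local Notation C := (e p0 p3 + e p1 p2).

Ltac tet_expand :=
  do 2 (br_expand; rewrite ?tet_br_adj ?tet_br_src ?tet_br_tgt ?tet_br_cyc
    ?(tet_skew h01) ?(tet_skew h23) ?(tet_skew h02) ?(tet_skew h31) ?(tet_skew h03)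
    ?(tet_skew h12) //); rewrite ?scaler_nat.

Lemma tet_matching_br : [[B, C]] = (e p1 p2 - e p0 p3) *+ 4.
Proof. by tet_expand; zmodsolve. Qed.

Lemma tet_matching_brBCA : [[ [[B, C]], A ]] = 0.
Proof. by rewrite tet_matching_br; tet_expand; zmodsolve. Qed.

Lemma tet_matching_brBBC : [[B, [[B, C]]]] = C *+ 16 + [[A, B]] *+ 4.
Proof. by rewrite tet_matching_br; tet_expand; zmodsolve. Qed.

Lemma tet_matching_dg : [[ [[C, [[C, [[C, B]]]]]], [[C, B]] ]] = 0.
Proof.
have CB : [[C, B]] = (e p0 p3 - e p1 p2) *+ 4.
  by rewrite br_skew tet_matching_br; zmodsolve.
set x := e p0 p3 in CB *; set y := e p1 p2 in CB *.
have xy : [[x, y]] = - [[y, x]] by rewrite br_skew.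
have dgx : [[ [[x, [[y, x]]]], x]] = - [[y, x]] *+ 4.
  have := tet_dg h03 h12 h01 h02 h31 h32; rewrite -/x -/y xy !brNr mulNrn.
  by move=> /eqP; rewrite eqr_opp => /eqP dg; rewrite br_skew dg; zmodsolve.
have dgy : [[ [[y, [[y, x]]]], y]] = - [[y, x]] *+ 4.
  by rewrite br_skew tet_dg // -/x -/y; zmodsolve.
have jac : [[ [[x, [[y, x]]]], y]] = [[ [[y, [[y, x]]]], x]].
  have J := lie_jacobi y x [[y, x]].
  rewrite lie_brxx addr0 (br_skew y [[y, x]]) brNr in J.
  by rewrite (br_skew y [[x, [[y, x]]]]) (br_skew x [[y, [[y, x]]]]); zmodsolve_using J.
rewrite CB; do 3 (br_expand; rewrite ?xy).
by rewrite dgx dgy jac; zmodsolve.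
Qed.

Lemma tet_matching_f_triple (w : K) : 4%:R * w = 1 ->
  f_triple (w *: B) (w *: C) (w *: A).
Proof.
move=> hw; split; rewrite !(brZl, brZr).
- by rewrite tet_matching_brBCA !scaler0.
- rewrite tet_matching_brBBC; move: (C) (A) => u v.
  rewrite -!scaler_nat !scalerDr !scalerA; congr (_ *: _ + _ *: _).
  + by transitivity (w * (4%:R * w) ^+ 2); [ring | rewrite hw expr1n mulr1].
  + by transitivity (w * w * (4%:R * w)); [ring | rewrite hw mulr1].
- by rewrite tet_matching_dg !scaler0.
Qed.

End TetrahedronMatchings.

(** * The two homomorphisms are mutually inverse *)

Definition tet_to_f K (L : lieAlgebra K) (e : 'I_4 -> 'I_4 -> L) (i : 'I_3) : L :=
  match nat_of_ord i with
  | 0 => e (inord 0) (inord 2) + e (inord 3) (inord 1)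
  | 1 => e (inord 0) (inord 3) + e (inord 1) (inord 2)
  | _ => e (inord 0) (inord 1) + e (inord 2) (inord 3)
  end.

Lemma inord_inj_in n : {in [pred m | m <= n]%N &, injective (@inord n)}.
Proof. by move=> m k hm hk /(congr1 val); rewrite /= !inordK. Qed.

Lemma uniq_inord n (s : seq nat) :
  uniq s && all (fun m => m <= n)%N s -> uniq (map (@inord n) s).
Proof.
by case/andP=> us /allP sn; rewrite map_inj_in_uniq //; apply: sub_in2 (@inord_inj_in n).
Qed.
Arguments uniq_inord : clear implicits.

Lemma tet_to_f_rel K (L : lieAlgebra K) (e : 'I_4 -> 'I_4 -> L) (w : K) :
  tet_rels e -> 4%:R * w = 1 -> f_rel (fun i => w *: tet_to_f e i).
Proof.
move=> he hw; apply/f_relE; rewrite /tet_to_f !inordK //.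
split; apply: tet_matching_f_triple => //.
- exact: (uniq_inord 3 [:: 0; 1; 2; 3]%N isT).
- exact: (uniq_inord 3 [:: 0; 2; 3; 1]%N isT).
- exact: (uniq_inord 3 [:: 0; 3; 1; 2]%N isT).
Qed.

Lemma tet_edge_ind (P : 'I_4 -> 'I_4 -> Prop) :
  (forall i j, i != j -> P i j -> P j i) ->
  P (inord 0) (inord 1) -> P (inord 2) (inord 3) -> P (inord 0) (inord 2) ->
  P (inord 3) (inord 1) -> P (inord 0) (inord 3) -> P (inord 1) (inord 2) ->
  forall i j, i != j -> P i j.
Proof.
move=> Psym P01 P23 P02 P31 P03 P12.
pose Q i j := i != j -> P i j.
have Qsym i j : Q i j -> Q j i by move=> Qij hji; apply: Psym (Qij _); rewrite eq_sym.
have Qii i : Q i i by rewrite /Q eqxx.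
suff Qall i j : Q i j by apply: Qall.
rewrite -(inord_val i) -(inord_val j).
case: i j => [ [|[|[|[|i] ] ] ] hi] [ [|[|[|[|j] ] ] ] hj] //=.
all: by [apply: Qii | move=> _ | apply: Qsym => _].
Qed.

Lemma lie_hom_pair_image K (L M : lieAlgebra K) (f : L -> M) (w : K) (b c : L) (B P Q : M) :
  lie_hom f -> 4%:R * w = 1 -> f b = w *: B -> f c = w *: (P + Q) ->
  [[B, P + Q]] = (Q - P) *+ 4 ->
  f (2%:R *: (c - [[b, c]])) = P /\ f (2%:R *: (c + [[b, c]])) = Q.
Proof.
move=> hf hw fb fc BPQ.
have fbc : f [[b, c]] = w *: (Q - P).
  rewrite (lie_hom_br hf) fb fc brZl brZr BPQ -scaler_nat !scalerA.
  by rewrite -mulrA [w * 4%:R]mulrC hw mulr1.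
have half u : (2%:R * w) *: (u *+ 2) = u.
  by rewrite -scaler_nat scalerA mulrAC -natrM hw scale1r.
split; rewrite (lie_homZ hf) ?(lie_homB hf) ?(lie_homD hf) fc fbc.
- by rewrite -scalerBr scalerA -[RHS]half; congr (_ *: _); zmodsolve.
- by rewrite -scalerDr scalerA -[RHS]half; congr (_ *: _); zmodsolve.
Qed.

Lemma lie_hom_tet_image K (L M : lieAlgebra K) (f : L -> M) (w : K) (z : 'I_3 -> L)
    (e : 'I_4 -> 'I_4 -> M) :
  lie_hom f -> tet_rels e -> 4%:R * w = 1 -> (forall i, f (z i) = w *: tet_to_f e i) ->
  forall i j, i != j -> f (tet_image (z (inord 0)) (z (inord 1)) (z (inord 2)) i j) = e i j.
Proof.
move=> hf he hw fz.
have := fz (inord 0); have := fz (inord 1); have := fz (inord 2).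
rewrite /tet_to_f !inordK // => fc fb fa.
have [f01 f23] := lie_hom_pair_image hf hw fb fc
  (tet_matching_br he (uniq_inord 3 [:: 0; 2; 3; 1]%N isT)).
have [f02 f31] := lie_hom_pair_image hf hw fc fa
  (tet_matching_br he (uniq_inord 3 [:: 0; 3; 1; 2]%N isT)).
have [f03 f12] := lie_hom_pair_image hf hw fa fb
  (tet_matching_br he (uniq_inord 3 [:: 0; 1; 2; 3]%N isT)).
apply: tet_edge_ind => [i j hij fij | | | | | |].
  by rewrite tet_image_skew // (lie_homN hf) fij (tet_skew he hij).
all: by rewrite /tet_image ?inordK.
Qed.

Lemma lie_hom_tet_to_f K (L M : lieAlgebra K) (f : L -> M) (w : K)
    (e : 'I_4 -> 'I_4 -> L) (z : 'I_3 -> M) :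
  lie_hom f -> 4%:R * w = 1 ->
  (forall i j, i != j ->
     f (e i j) = tet_image (z (inord 0)) (z (inord 1)) (z (inord 2)) i j) ->
  forall i, f (w *: tet_to_f e i) = z i.
Proof.
move=> hf hw fe i.
have fe' m n : (m <= 3)%N -> (n <= 3)%N -> m != n -> f (e (inord m) (inord n)) =
    tet_image (z (inord 0)) (z (inord 1)) (z (inord 2)) (inord m) (inord n).
  by move=> hm hn mn; apply: fe; rewrite (inj_in_eq (@inord_inj_in 3)).
have avg_pm (x v : M) : w *: (2%:R *: (x - v) + 2%:R *: (x + v)) = x.
  rewrite -scalerDr (_ : x - v + (x + v) = x *+ 2); last by zmodsolve.
  by rewrite -scaler_nat !scalerA -natrM mulrC hw scale1r.
rewrite (lie_homZ hf) -(inord_val i).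
case: i => [ [|[|[|n] ] ] hi] //=; rewrite /tet_to_f inordK //= (lie_homD hf) !fe' //.
all: by rewrite /tet_image !inordK.
Qed.

Theorem theorem5p2 (K : fieldType) (hK : (2%:R : K) != 0)
    (G : lieAlgebra K) (X : tet_index -> G)
    (hG : is_tetrahedron_algebra X)
    (F : lieAlgebra K) (z : 'I_3 -> F)
    (hF : is_f_algebra z) :
  let z0 := z (inord 0) in let z1 := z (inord 1) in let z2 := z (inord 2) in
  let i0 : 'I_4 := inord 0 in let i1 : 'I_4 := inord 1 in
  let i2 : 'I_4 := inord 2 in let i3 : 'I_4 := inord 3 in
  forall (h01 : i0 != i1) (h23 : i2 != i3) (h02 : i0 != i2)
         (h31 : i3 != i1) (h03 : i0 != i3) (h12 : i1 != i2),
  exists Phi : G -> F, lie_iso Phi /\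
    Phi (tetX X h01) = 2%:R *: (z2 - [[z1, z2]]) /\
    Phi (tetX X h23) = 2%:R *: (z2 + [[z1, z2]]) /\
    Phi (tetX X h02) = 2%:R *: (z0 - [[z2, z0]]) /\
    Phi (tetX X h31) = 2%:R *: (z0 + [[z2, z0]]) /\
    Phi (tetX X h03) = 2%:R *: (z1 - [[z0, z1]]) /\
    Phi (tetX X h12) = 2%:R *: (z1 + [[z0, z1]]).
Proof.
move=> z0 z1 z2 i0 i1 i2 i3 h01 h23 h02 h31 h03 h12.
have [relX [univX _] ] := hG; have [relz [univz _] ] := hF.
have [fz0 fz1 fz2] := (f_relE z).1 relz.
have [Phi [hPhi PhiX] ] := univX F _ (tet_rel_fun (tet_image_rels fz0 fz1 fz2)).
pose w := (4%:R : K)^-1.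
have hw : 4%:R * w = 1 by rewrite mulfV // (natrM K 2 2) mulf_neq0.
have heX := tet_rels_ext relX.
have [Psi [hPsi Psiz] ] := univz G _ (tet_to_f_rel heX hw).
exists Phi; split; last by rewrite /tetX !PhiX /tet_image /= !inordK.
apply: (presented_by_iso hG hF hPhi hPsi) => [ [ [i j] hij] | i].
  by rewrite PhiX /= (lie_hom_tet_image hPsi heX hw Psiz) // tet_extE.
rewrite Psiz; apply: (lie_hom_tet_to_f hPhi hw) => j k hjk.
by rewrite -(tet_extE X hjk) PhiX.
Qed.
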